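(* Both SW-PAV and IW-PAV can fail SW-JR when an SW-JR committee exists: there exist approval-based SCV instances admitting a committee that satisfies SW-JR, in which a committee maximizing the SW-PAV score does not satisfy SW-JR, and likewise in which a committee maximizing the IW-PAV score does not satisfy SW-JR.
   Context: An approval-based sub-committee voting (SCV) instance consists of a set of voters $N=\{1,\ldots,n\}$, a finite set of candidates $C$ partitioned into candidate subsets $C_1,\ldots,C_\ell$, positive integer quotas $k_j\le |C_j|$ with $k=\sum_{j=1}^\ell k_j$, and approval ballots $A_i\subseteq C$ for $i\in N$. A committee is a set $W\subseteq C$ with $|W\cap C_j|=k_j$ for every $j$. Let $r(0)=0$ and $r(t)=\sum_{p=1}^t 1/p$ for $t\ge1$. The SW-PAV score of $W$ is $\sum_{i\in N} r(|W\cap A_i|)$; the IW-PAV score is $\sum_{j=1}^\ell\sum_{i\in N} r(|W\cap A_i\cap C_j|)$. $W$ satisfies SW-JR if for every $X\subseteq N$ with $|X|\ge n/k$ and $|\bigcap_{i\in X}A_i|\ge 1$ we have $|W\cap \bigcup_{i\in X}A_i|\ge 1$. *)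

From mathcomp Require Import all_boot all_order all_algebra.
Set Implicit Arguments. Unset Strict Implicit. Unset Printing Implicit Defensive.
Import Order.TTheory GRing.Theory Num.Theory.
Local Open Scope ring_scope.

Section SCV.
Variables (C : finType) (l n : nat).
(* part c = index j of the candidate subset C_j containing c *)
Variable part : C -> 'I_l.
Variable quota : 'I_l -> nat.
Variable A : 'I_n -> {set C}.

Definition Csub (j : 'I_l) : {set C} := [set c | part c == j].

Definition valid_instance : bool :=
  [&& (0 < l)%N, (0 < n)%N & [forall j, (0 < quota j)%N && (quota j <= #|Csub j|)%N]].

Definition ktot : nat := (\sum_(j < l) quota j)%N.

Definition is_committee (W : {set C}) : bool :=
  [forall j, #|W :&: Csub j| == quota j].

Definition harm (t : nat) : rat := \sum_(p < t) (p.+1%:R)^-1.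

Definition sw_pav (W : {set C}) : rat := \sum_(i < n) harm #|W :&: A i|.

Definition iw_pav (W : {set C}) : rat :=
  \sum_(j < l) \sum_(i < n) harm #|W :&: A i :&: Csub j|.

(* |X| >= n/k is written |X| * k >= n (k > 0 for valid instances) *)
Definition sw_jr (W : {set C}) : Prop :=
  forall X : {set 'I_n}, (n <= #|X| * ktot)%N ->
    (\bigcap_(i in X) A i) != set0 ->
    (W :&: \bigcup_(i in X) A i) != set0.

Definition maximizes (score : {set C} -> rat) (W : {set C}) : Prop :=
  is_committee W /\ forall W', is_committee W' -> score W' <= score W.

End SCV.

(* Take candidates 0..4 split into the parts {0,1,4} with quota 3 and {2,3}
   with quota 1, and four voters approving {0,3}, {2}, {1,3,4}, {1,3,4}.
   Since n = k, every single voter is a group of size n/k, so voter 1 forces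
   candidate 2 into any SW-JR committee, and the exhausted part {0,1,4} forces
   the rest: {0,1,2,4} is the only SW-JR committee.  Swapping 2 for 3 serves
   three voters instead of one and raises both PAV scores (SW: 5 < 31/6,
   IW: 5 < 7). *)

From mathcomp Require Import all_boot all_order all_algebra.
From mathcomp Require Import lra.
Import Order.TTheory GRing.Theory Num.Theory.
Local Open Scope ring_scope.

Set Implicit Arguments.
Unset Strict Implicit.
Unset Printing Implicit Defensive.

Section GeneralFacts.

Variables (C : finType) (l n : nat) (part : C -> 'I_l) (quota : 'I_l -> nat).
Variable A : 'I_n -> {set C}.

Lemma card_committee W : is_committee part quota W -> #|W| = ktot quota.
Proof.
move=> /forallP HW; rewrite -sum1_card (partition_big part xpredT) //=.
apply: eq_bigr => j _; rewrite -(eqP (HW j)) -sum1_card.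
by apply: eq_bigl => c; rewrite !inE.
Qed.

Lemma full_part_sub_committee W j :
  is_committee part quota W -> quota j = #|Csub part j| -> Csub part j \subset W.
Proof.
move=> /forallP /(_ j) /eqP HW Hj; apply/setIidPr/eqP.
by rewrite eqEcard subsetIr HW Hj leqnn.
Qed.

Lemma sw_jr_meets_ballot W i :
  (n <= ktot quota)%N -> sw_jr quota A W -> A i != set0 -> W :&: A i != set0.
Proof.
move=> le_nk jrW Ai0.
by have := jrW [set i]; rewrite cards1 mul1n !big_set1; apply.
Qed.

Lemma sw_jr_of_meets_ballots W :
  (0 < n)%N -> (forall i, W :&: A i != set0) -> sw_jr quota A W.
Proof.
move=> n_gt0 WA X le_nX _.
have /card_gt0P [i Xi] : (0 < #|X|)%N.
  by move: (leq_trans n_gt0 le_nX); rewrite muln_gt0 => /andP[].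
apply: contraNneq (WA i) => WX0.
by rewrite -subset0 -WX0 setIS // (bigcup_sup _ Xi).
Qed.

Lemma maximizer_not_sw_jr (score : {set C} -> rat) W0 W1 :
  (forall W, is_committee part quota W -> sw_jr quota A W -> W = W0) ->
  is_committee part quota W1 -> score W0 < score W1 ->
  forall W, maximizes part quota score W -> ~ sw_jr quota A W.
Proof.
move=> uniqW0 comW1 ltW01 W [comW maxW] jrW.
by move: (maxW W1 comW1); rewrite (uniqW0 W comW jrW) leNgt ltW01.
Qed.

End GeneralFacts.

Lemma card_sum_mem (T : finType) (A : {set T}) : #|A| = (\sum_(x : T) (x \in A))%N.
Proof. by rewrite -sum1_card big_mkcond; apply: eq_bigr => x _; case: (x \in A). Qed.

Definition ordset (s : seq nat) : {set 'I_5} := [set x : 'I_5 | val x \in s].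

Definition part_ex (c : 'I_5) : 'I_2 := if val c \in [:: 2; 3]%N then ord_max else ord0.
Definition quota_ex (j : 'I_2) : nat := if j == ord0 then 3 else 1.
Definition ballot_ex (i : 'I_4) : {set 'I_5} :=
  ordset (nth [::] [:: [:: 0; 3]; [:: 2]; [:: 1; 3; 4]; [:: 1; 3; 4]]%N i).

Definition W_jr : {set 'I_5} := ordset [:: 0; 1; 2; 4]%N.
Definition W_pav : {set 'I_5} := ordset [:: 0; 1; 3; 4]%N.

Ltac compute_cards := rewrite !card_sum_mem !big_ord_recr big_ord0 /= !inE.

Lemma ktot_ex : ktot quota_ex = 4%N.
Proof. by rewrite /ktot !big_ord_recr big_ord0. Qed.

Lemma valid_ex : valid_instance 4 part_ex quota_ex.
Proof. by apply/and3P; split=> //; apply/forallP => -[[|[|j]] ?] //=; compute_cards. Qed.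

Lemma committee_W_jr : is_committee part_ex quota_ex W_jr.
Proof. by apply/forallP => -[[|[|j]] ?] //=; compute_cards. Qed.

Lemma committee_W_pav : is_committee part_ex quota_ex W_pav.
Proof. by apply/forallP => -[[|[|j]] ?] //=; compute_cards. Qed.

Lemma sw_jr_W_jr : sw_jr quota_ex ballot_ex W_jr.
Proof.
apply: sw_jr_of_meets_ballots => // i; rewrite -card_gt0.
by case: i => -[|[|[|[|i]]]] ? //=; compute_cards.
Qed.

Lemma W_jr_unique W :
  is_committee part_ex quota_ex W -> sw_jr quota_ex ballot_ex W -> W = W_jr.
Proof.
move=> comW jrW.
have /set0Pn [c2] : W :&: ballot_ex (Ordinal (isT : 1 < 4)%N) != set0.
  apply: sw_jr_meets_ballot jrW _; first by rewrite ktot_ex.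
  by rewrite -card_gt0; compute_cards.
rewrite !inE => /andP[W_c2 /eqP c2E].
have part0_sub : Csub part_ex ord0 \subset W.
  by apply: full_part_sub_committee comW _; compute_cards.
have W_jr_eq : W_jr = c2 |: Csub part_ex ord0.
  by apply/setP => -[[|[|[|[|[|c]]]]] ?] //; rewrite !inE -val_eqE /= c2E.
have sub_W : W_jr \subset W by rewrite W_jr_eq subUset sub1set W_c2 part0_sub.
apply/esym/eqP; rewrite eqEcard sub_W (card_committee comW) ktot_ex /=.
by compute_cards.
Qed.

Lemma harm0 : harm 0 = 0.
Proof. by rewrite /harm big_ord0. Qed.

Lemma harmS t : harm t.+1 = harm t + t.+1%:R^-1.
Proof. by rewrite /harm big_ord_recr. Qed.

Lemma card_W_jr_ballot i : #|W_jr :&: ballot_ex i| = nth 0%N [:: 1; 1; 2; 2]%N i.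
Proof. by case: i => -[|[|[|[|i]]]] ? //=; compute_cards. Qed.

Lemma card_W_pav_ballot i : #|W_pav :&: ballot_ex i| = nth 0%N [:: 2; 0; 3; 3]%N i.
Proof. by case: i => -[|[|[|[|i]]]] ? //=; compute_cards. Qed.

Lemma sw_pav_lt : sw_pav ballot_ex W_jr < sw_pav ballot_ex W_pav.
Proof.
rewrite /sw_pav; under eq_bigr do rewrite card_W_jr_ballot.
under [X in _ < X]eq_bigr do rewrite card_W_pav_ballot.
rewrite !big_ord_recr !big_ord0 /= !harmS harm0; lra.
Qed.

Lemma card_W_jr_ballot_part j i :
  #|W_jr :&: ballot_ex i :&: Csub part_ex j| =
  nth 0%N (nth [::] [:: [:: 1; 0; 2; 2]; [:: 0; 1; 0; 0]]%N j) i.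
Proof. by case: j => -[|[|j]] ? //; case: i => -[|[|[|[|i]]]] ? //=; compute_cards. Qed.

Lemma card_W_pav_ballot_part j i :
  #|W_pav :&: ballot_ex i :&: Csub part_ex j| =
  nth 0%N (nth [::] [:: [:: 1; 0; 2; 2]; [:: 1; 0; 1; 1]]%N j) i.
Proof. by case: j => -[|[|j]] ? //; case: i => -[|[|[|[|i]]]] ? //=; compute_cards. Qed.

Lemma iw_pav_lt : iw_pav part_ex ballot_ex W_jr < iw_pav part_ex ballot_ex W_pav.
Proof.
rewrite /iw_pav; under eq_bigr do under eq_bigr do rewrite card_W_jr_ballot_part.
under [X in _ < X]eq_bigr do under eq_bigr do rewrite card_W_pav_ballot_part.
rewrite !big_ord_recr !big_ord0 /= !harmS harm0; lra.
Qed.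

Theorem mainTheorem11 :
  (exists (C : finType) (l n : nat) (part : C -> 'I_l) (quota : 'I_l -> nat)
          (A : 'I_n -> {set C}),
     valid_instance n part quota /\
     (exists W, is_committee part quota W /\ sw_jr quota A W) /\
     (forall W, maximizes part quota (sw_pav A) W -> ~ sw_jr quota A W)) /\
  (exists (C : finType) (l n : nat) (part : C -> 'I_l) (quota : 'I_l -> nat)
          (A : 'I_n -> {set C}),
     valid_instance n part quota /\
     (exists W, is_committee part quota W /\ sw_jr quota A W) /\
     (forall W, maximizes part quota (iw_pav part A) W -> ~ sw_jr quota A W)).
Proof.
have jr_committee : exists W, is_committee part_ex quota_ex W /\ sw_jr quota_ex ballot_ex W.
  by exists W_jr; split; [exact: committee_W_jr | exact: sw_jr_W_jr].
split; exists ('I_5 : finType), 2%N, 4%N, part_ex, quota_ex, ballot_ex;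
  (split; [exact: valid_ex | split; [exact: jr_committee |]]).
- exact: maximizer_not_sw_jr W_jr_unique committee_W_pav sw_pav_lt.
- exact: maximizer_not_sw_jr W_jr_unique committee_W_pav iw_pav_lt.
Qed.
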